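(* Consider a repeater chain in the model described in the context with $M+N+1$ nodes labelled $1,\dots,M+N+1$ and elementary-link fidelity $F$. Suppose nodes $1,\dots,M$ are at fixed locations with fixed distances between consecutive ones, nodes $M$ and $M+N+1$ are a distance $L$ apart, and the $N$ repeater nodes $M+1,\dots,M+N$ are placed along a straight line between them. Let $\ell_i\ge0$ be the distance between nodes $M+i-1$ and $M+i$ for $i=1,\dots,N+1$, with $\sum_i\ell_i=L$. Suppose nodes $1,\dots,M-1$ have memory coherence time $T$, while nodes $M,M+1,\dots,M+N+1$ have perfect quantum memory. Then the secret-key rate $\mathrm{SKR}$ of the chain, as a function of $(\ell_1,\dots,\ell_{N+1})$, is maximal when $\ell_i=L/(N+1)$ for all $i$.
   Context: Repeater-chain model (swap-ASAP, synchronized attempts). Edge $j$ connects nodes $j$ and $j+1$ and has length $l_j\ge0$ (km). Entanglement generation proceeds in synchronized rounds of duration $t_{\mathrm{att}}=\frac1c\max_jl_j$, $c=200{,}000$ km/s. In each round, each edge not yet successful attempts, succeeding independently with probability $p_j=10^{-\alpha l_j/10}$, $\alpha=0.2\ \mathrm{km}^{-1}$; the number of rounds $X_j$ until edge $j$ succeeds is geometric on $\{1,2,\dots\}$ with parameter $p_j$, independently across edges. Edge $j$ completes at time $t_j=t_{\mathrm{att}}X_j$, and the chain completes at $T_{\mathrm{done}}=t_{\mathrm{att}}\max_jX_j$; the entangling rate is $R=1/\mathbb E[T_{\mathrm{done}}]$. Each successful edge produces the two-qubit Werner state $W_{w_0}=w_0|\phi^+\rangle\langle\phi^+|+(1-w_0)\mathbb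 1/4$ with $w_0=(4F-1)/3$. Each repeater node (every node other than the two end nodes) performs entanglement swapping as soon as both of its links exist; meanwhile a stored qubit $k$ held for time $t$ in a memory with coherence time $T$ undergoes $\rho\mapsto e^{-t/T}\rho+(1-e^{-t/T})\frac{\mathbb 1_2}{2}\otimes\mathrm{Tr}_k\rho$; a node with perfect memory undergoes no such noise, and end nodes measure immediately and suffer no memory noise. Consequently, given the completion times, the end-to-end state is the Werner state with parameter $w_{e2e}=w_0^{K}\prod_{i}e^{-|t_i-t_{i-1}|/T}$, where $K$ is the number of edges and the product is over repeater nodes $i$ with imperfect memory (node $i$ sitting between edges $i-1$ and $i$); the delivered state (not conditioned on completion times) is the Werner state with parameter $\mathbb E[w_{e2e}]$. Its quantum bit error rates are $Q_X=Q_Z=(1-\mathbb E[w_{e2e}])/2$, the secret-key fraction is $\mathrm{SKF}=\max(0,1-h(Q_X)-h(Q_Z))$ with $h(x)=-x\log_2x-(1-x)\log_2(1-x)$, and the secret-key rate is $\mathrm{SKR}=R\cdot\mathrm{SKF}$. *)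

From HB Require Import structures.
From mathcomp Require Import all_boot all_order all_algebra.
From mathcomp Require Import all_classical all_reals all_analysis.
Set Implicit Arguments. Unset Strict Implicit. Unset Printing Implicit Defensive.
Import Order.TTheory GRing.Theory Num.Theory.
Local Open Scope ring_scope.

Section RepeaterChain.
Variable R : realType.

(* speed of light in fibre, km/s *)
Definition light_speed : R := 2 * 10 ^+ 5.
(* attenuation alpha = 0.2 per km *)
Definition alpha_att : R := 2 / 10.

Definition succ_prob (l : R) : R := 10 `^ (- (alpha_att * l / 10)).

Definition geom_pmf (p : R) (n : nat) : R :=
  if n is k.+1 then p * (1 - p) ^+ k else 0.

Variable K : nat. (* number of edges; nodes are 0..K (0-based) *)

Definition t_att (len : 'I_K -> R) : R :=
  (\big[Num.max/0]_(j < K) len j) / light_speed.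

Definition joint_pmf (len : 'I_K -> R) (x : {ffun 'I_K -> nat}) : R :=
  \prod_(j < K) geom_pmf (succ_prob (len j)) (x j).

(* expectation of a NONNEGATIVE function of (X_0,...,X_{K-1}) *)
Definition expect (len : 'I_K -> R) (f : {ffun 'I_K -> nat} -> R) : \bar R :=
  (\esum_(x in [set: {ffun 'I_K -> nat}]) (joint_pmf len x * f x)%:E)%E.

Definition T_done (len : 'I_K -> R) (x : {ffun 'I_K -> nat}) : R :=
  t_att len * (\max_(j < K) x j)%:R.

Definition ent_rate (len : 'I_K -> R) : R := (fine (expect len (T_done len)))^-1.

Definition prev_edge (i : 'I_K) : 'I_K :=
  Ordinal (leq_ltn_trans (leq_pred i) (ltn_ord i)).

(* Repeater node i (0-based, 1 <= i <= K-1) sits between edges i-1 and i.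
   [imperfect i] says node i (0-based label) has imperfect memory. *)
Definition decay (T : R) (imperfect : nat -> bool) (len : 'I_K -> R)
  (x : {ffun 'I_K -> nat}) : R :=
  \prod_(i < K | (0 < i)%N && imperfect i)
     expR (- `|t_att len * (x i)%:R - t_att len * (x (prev_edge i))%:R| / T).

Definition werner_param (F : R) : R := (4 * F - 1) / 3.

Definition mean_w (F T : R) (imperfect : nat -> bool) (len : 'I_K -> R) : R :=
  werner_param F ^+ K * fine (expect len (decay T imperfect len)).

Definition log2 (x : R) : R := ln x / ln 2.
Definition bin_entropy (x : R) : R := - x * log2 x - (1 - x) * log2 (1 - x).

Definition SKF (F T : R) (imperfect : nat -> bool) (len : 'I_K -> R) : R :=
  let Q := (1 - mean_w F T imperfect len) / 2 in
  Num.max 0 (1 - bin_entropy Q - bin_entropy Q).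

Definition SKR (F T : R) (imperfect : nat -> bool) (len : 'I_K -> R) : R :=
  ent_rate len * SKF F T imperfect len.

End RepeaterChain.

(* Chain of the theorem: edges 1..M-1 (fixed lengths d) followed by
   edges of lengths l_1..l_{N+1} between nodes M and M+N+1. *)
Definition chain_len (R : realType) (m n : nat) (d : 'I_m -> R) (l : 'I_n -> R)
  (j : 'I_(m + n)) : R :=
  match fintype.split j with inl a => d a | inr b => l b end.

(* nodes 1..M-1 (1-based), i.e. 0..M-2 (0-based), have imperfect memory *)
Definition imperfect_first (M : nat) (i : nat) : bool := (i < M.-1)%N.

From HB Require Import structures.
From mathcomp Require Import all_boot all_order all_algebra.
From mathcomp Require Import all_classical all_reals all_analysis.
From mathcomp Require Import lra ring.
Import Order.TTheory GRing.Theory Num.Theory.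
Import numFieldNormedType.Exports.
Local Open Scope ring_scope.

Set Implicit Arguments. Unset Strict Implicit. Unset Printing Implicit Defensive.

(* Edge j needs a geometric number X_j of rounds with parameter p_j = exp(-b l_j), so
   E[max_j X_j] = sum_k (1 - prod_j P(X_j <= k)) with P(X_j <= k) = 1 - (1 - p_j)^k.
   For each k the map l |-> 1 - (1 - exp(-b l))^k is log-concave, hence under
   sum_i l_i = L the product over the free edges is largest at equal spacing; equal
   spacing also minimises max_j l_j, i.e. t_att, so it minimises E[T_done].
   The imperfect memories sit between fixed edges, so E[w_e2e] depends on the free
   lengths only through t_att and decreases with it, and the secret-key fraction is
   nondecreasing in |E[w_e2e]|. *)

Section geom_cdf.
Variable R : realType.

Definition geom_cdf (p : R) (k : nat) : R := 1 - (1 - p) ^+ k.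

Lemma geom_cdf0 (p : R) : geom_cdf p 0 = 0.
Proof. by rewrite /geom_cdf expr0 subrr. Qed.

Lemma geom_cdfE (p : R) k : geom_cdf p k = p * \sum_(i < k) (1 - p) ^+ i.
Proof. by rewrite /geom_cdf -opprB subrX1 -mulNr opprB subKr. Qed.

Lemma geom_cdf_ge0 (p : R) k : 0 <= p <= 1 -> 0 <= geom_cdf p k.
Proof.
by case/andP=> p0 p1; rewrite subr_ge0 exprn_ile1 // ?subr_ge0 // gerBl.
Qed.

Lemma geom_sum_cross_le (u v : R) k : 0 <= u -> u <= v ->
  u ^+ k.-1 * \sum_(i < k) v ^+ i <= v ^+ k.-1 * \sum_(i < k) u ^+ i.
Proof.
move=> u0 uv; rewrite !mulr_sumr; apply: ler_sum => i _.
have v0 : 0 <= v := le_trans u0 uv.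
have /subnKC <- : (i <= k.-1)%N by case: k i => [|k] [].
set j := (k.-1 - i)%N; rewrite !exprD.
rewrite [u ^+ i * _ * _]mulrAC [v ^+ i * _ * _]mulrAC [_ * u ^+ i]mulrC.
by rewrite ler_wpM2l ?mulr_ge0 ?exprn_ge0 // lerXn2r // nnegrE.
Qed.

Lemma is_derive_expR_mull (b x : R) :
  is_derive x 1 (fun l : R => expR (b * l)) (b * expR (b * x)).
Proof.
have hlin : is_derive x 1 (fun l : R => b * l) b.
  by apply: is_derive_eq; exact: mulr1.
by rewrite mulrC; exact: is_derive1_comp (is_derive_expR (b * x)) hlin.
Qed.

Lemma is_derive_geom_cdf_expR (b x : R) (k : nat) :
  is_derive x 1 (fun l : R => geom_cdf (expR (- b * l)) k)
    (- (b * k%:R * expR (- b * x) * (1 - expR (- b * x)) ^+ k.-1)).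
Proof.
have hX := is_deriveX k
  (is_deriveB (is_derive_cst (1 : R) x 1) (is_derive_expR_mull (- b) x)).
rewrite exprfctE in hX.
apply: is_derive_eq (is_deriveB (is_derive_cst (1 : R) x 1) hX) _.
by rewrite /GRing.scale /= !fctE; ring.
Qed.

Lemma derive1_peak_le (f : R -> R) (a m : R) : (forall x, derivable f x 1) ->
  (forall x, a < x < m -> 0 <= derive1 f x) -> (forall x, m < x -> derive1 f x <= 0) ->
  forall x, a <= x -> f x <= f m.
Proof.
move=> df incr decr x ax.
have cf : continuous f.
  by move=> y; apply: differentiable_continuous; rewrite -derivable1_diffP.
have [xm|mx] := leP x m.
  have incr' y : y \in `]a, m[ -> 0 <= derive1 f y by rewrite in_itv; exact: incr.
  exact: ger0_derive1_ndecr (fun y _ => df y) incr' (continuous_subspaceT cf)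
    _ _ ax xm (lexx m).
have decr' y : y \in `]m, +oo[ -> derive1 f y <= 0 by rewrite in_itv andbT; exact: decr.
exact: ler0_derive1_nincry (fun y _ => df y) decr' (continuous_subspaceT cf)
  _ _ (lexx m) (ltW mx).
Qed.

Lemma geom_cdf_expR_logconcave (b m : R) (k : nat) : 0 < b -> 0 <= m ->
  exists c, forall l, 0 <= l ->
    geom_cdf (expR (- b * l)) k * expR (c * l) <=
    geom_cdf (expR (- b * m)) k * expR (c * m).
Proof.
move=> b0 m0; case: k => [|k]; first by exists 0 => l _; rewrite !geom_cdf0 !mul0r.
pose e (l : R) := expR (- b * l); pose u (l : R) := 1 - e l.
pose S (l : R) := \sum_(i < k.+1) u l ^+ i.
have u0 l : 0 <= l -> 0 <= u l.
  by move=> l0; rewrite subr_ge0 expR_le1 mulNr oppr_le0 mulr_ge0 // ltW.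
have le_u x y : x <= y -> u x <= u y.
  by move=> xy; rewrite lerD2l lerN2 ler_expR !mulNr lerN2 ler_pM2l.
have S_gt0 : 0 < S m.
  by rewrite /S big_ord_recl expr0 ltr_pwDl // sumr_ge0 // => i _; rewrite exprn_ge0 // u0.
(* c is chosen so that the derivative of phi below vanishes at m *)
pose c := b * k.+1%:R * u m ^+ k / S m.
exists c.
pose phi (l : R) := geom_cdf (e l) k.+1 * expR (c * l).
pose D (x : R) :=
  expR (c * x) * (b * k.+1%:R * e x / S m) * (u m ^+ k * S x - u x ^+ k * S m).
have dphi (x : R) : is_derive x 1 phi (D x).
  apply: is_derive_eq
    (is_deriveM (is_derive_geom_cdf_expR b x k.+1) (is_derive_expR_mull c x)) _.
  rewrite /GRing.scale /= geom_cdfE /D -/(e x) -/(u x) -/(S x) /c.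
  by field; rewrite gt_eqF.
have pre_ge0 (x : R) : 0 <= expR (c * x) * (b * k.+1%:R * e x / S m).
  by rewrite mulr_ge0 ?divr_ge0 ?mulr_ge0 ?expR_ge0 // ltW.
move=> l l0; change (phi l <= phi m).
apply: (derive1_peak_le (f := phi) (a := 0)) l0 => [x|x /andP[x0 xm]|x mx].
- by case: (dphi x).
- rewrite derive1E (@derive_val _ _ _ _ _ _ _ (dphi x)) mulr_ge0 // subr_ge0.
  exact: (geom_sum_cross_le k.+1 (u0 _ (ltW x0)) (le_u _ _ (ltW xm))).
- rewrite derive1E (@derive_val _ _ _ _ _ _ _ (dphi x)) mulr_ge0_le0 // subr_le0.
  exact: (geom_sum_cross_le k.+1 (u0 _ m0) (le_u _ _ (ltW mx))).
Qed.

Lemma prod_geom_cdf_expR_le (b L : R) (k n : nat) (l : 'I_n.+1 -> R) :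
  0 < b -> (forall i, 0 <= l i) -> \sum_i l i = L ->
  \prod_i geom_cdf (expR (- b * l i)) k <=
  geom_cdf (expR (- b * (L / n.+1%:R))) k ^+ n.+1.
Proof.
move=> b0 l0 sL; set m := L / n.+1%:R.
have m0 : 0 <= m by rewrite divr_ge0 // -sL sumr_ge0.
have [c hc] := geom_cdf_expR_logconcave k b0 m0.
have p01 i : 0 <= expR (- b * l i) <= 1.
  by rewrite expR_ge0 expR_le1 mulNr oppr_le0 mulr_ge0 // ltW.
have := @ler_prod _ _ (index_enum 'I_n.+1) xpredT
  (fun i => geom_cdf (expR (- b * l i)) k * expR (c * l i))
  (fun=> geom_cdf (expR (- b * m)) k * expR (c * m)).
rewrite big_split /= -expR_sum -mulr_sumr sL prodr_const card_ord exprMn -expRM_natl.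
have -> : n.+1%:R * (c * m) = c * L by rewrite /m; field.
rewrite ler_pM2r ?expR_gt0 //; apply=> i _.
by rewrite mulr_ge0 ?expR_ge0 ?geom_cdf_ge0 ?hc.
Qed.

End geom_cdf.

Section key_fraction.
Variable R : realType.

Lemma mulr_ln_div_le (x y : R) : 0 < x -> 0 < y -> x * ln y - x * ln x <= y - x.
Proof.
move=> x0 y0; rewrite -mulrBr -ln_div ?posrE //.
have : ln (1 + (y / x - 1)) <= y / x - 1.
  by apply: le_ln1Dx; rewrite ltrBrDl subrr divr_gt0.
rewrite addrC subrK => /(ler_wpM2l (ltW x0)).
by rewrite mulrBr mulrCA divff ?gt_eqF // !mulr1.
Qed.

Lemma bin_entropyE (x : R) :
  bin_entropy x = (- (x * ln x) - (1 - x) * ln (1 - x)) / ln 2.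
Proof. by rewrite /bin_entropy /log2; ring. Qed.

Lemma bin_entropy1B (x : R) : bin_entropy (1 - x) = bin_entropy x.
Proof. by rewrite /bin_entropy subKr; ring. Qed.

Lemma bin_entropy_ge0 (x : R) : 0 <= x <= 1 -> 0 <= bin_entropy x.
Proof.
case/andP=> x0 x1; rewrite bin_entropyE divr_ge0 ?ln_ge0 ?ler1n //.
have : x * ln x <= 0 by rewrite mulr_ge0_le0 ?ln_le0.
have : (1 - x) * ln (1 - x) <= 0 by rewrite mulr_ge0_le0 ?ln_le0 ?subr_ge0 ?gerBl.
lra.
Qed.

Lemma bin_entropy_homo (x y : R) : 0 <= x -> x <= y -> y <= 1 / 2 ->
  bin_entropy x <= bin_entropy y.
Proof.
move=> x0 xy y2; have [->|xpos] := eqVneq x 0.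
  have -> : bin_entropy (0 : R) = 0 by rewrite bin_entropyE subr0 ln1; ring.
  by apply: bin_entropy_ge0; lra.
have x_gt0 : 0 < x by rewrite lt0r xpos.
have y_gt0 : 0 < y := lt_le_trans x_gt0 xy.
have t1 := mulr_ln_div_le x_gt0 y_gt0.
have t2 : (1 - x) * ln (1 - y) - (1 - x) * ln (1 - x) <= (1 - y) - (1 - x).
  by apply: mulr_ln_div_le; lra.
have ln_le : ln y <= ln (1 - y) by rewrite ler_ln ?posrE //; lra.
have : (x - y) * (ln (1 - y) - ln y) <= 0 by apply: mulr_le0_ge0; lra.
rewrite !bin_entropyE ler_pM2r ?invr_gt0 ?ln_gt0 ?ltr1n //; nra.
Qed.

Definition key_fraction (w : R) : R :=
  Num.max 0 (1 - bin_entropy ((1 - w) / 2) - bin_entropy ((1 - w) / 2)).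

Lemma key_fraction_ge0 (w : R) : 0 <= key_fraction w.
Proof. by rewrite le_max lexx. Qed.

Lemma key_fraction_normr (w : R) : key_fraction `|w| = key_fraction w.
Proof.
have [w0|w0] := leP 0 w; first by rewrite ger0_norm.
rewrite ltr0_norm // /key_fraction.
have -> : (1 - - w) / 2 = 1 - (1 - w) / 2 by field.
by rewrite bin_entropy1B.
Qed.

Lemma key_fraction_le (w1 w2 : R) : `|w1| <= `|w2| -> `|w2| <= 1 ->
  key_fraction w1 <= key_fraction w2.
Proof.
move=> w12 w21; rewrite -key_fraction_normr -[key_fraction w2]key_fraction_normr.
have w10 := normr_ge0 w1.
have : bin_entropy ((1 - `|w2|) / 2) <= bin_entropy ((1 - `|w1|) / 2).
  by apply: bin_entropy_homo; lra.
by move=> H12; apply: le_max2 => //; lra.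
Qed.

End key_fraction.

Local Open Scope classical_set_scope.

Section esum_ffun.
Variable R : realType.
Local Open Scope ereal_scope.

Lemma esumZl (T : choiceType) (S : set T) (c : R) (a : T -> \bar R) :
  (0 <= c)%R -> (forall x, 0 <= a x) ->
  \esum_(i in S) (c%:E * a i) = c%:E * \esum_(i in S) a i.
Proof.
move=> c0 a0; have [->|c_neq0] := eqVneq c 0%R.
  by rewrite mul0e esum1 // => i _; rewrite mul0e.
rewrite /esum -ereal_sup_pZl; last by rewrite lt0r c_neq0.
congr ereal_sup; apply/seteqP; split => x /=.
- case=> A [finA SA] <-; exists (\sum_(i \in A) a i); first by exists A.
  by rewrite !fsbig_finite // ge0_sume_distrr.
- case=> y [A [finA SA] <-] <-; exists A => //.
  by rewrite !fsbig_finite // ge0_sume_distrr.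
Qed.

Lemma esumT_pair (A B : choiceType) (a : A -> B -> \bar R) :
  (forall x y, 0 <= a x y) ->
  \esum_(p in [set: A * B]) a p.1 p.2 = \esum_(x in [set: A]) \esum_(y in [set: B]) a x y.
Proof.
by move=> a0; rewrite esum_esum //; congr esum; apply/seteqP; split => // -[].
Qed.

Lemma esumT_swap (A B : choiceType) (a : A -> B -> \bar R) :
  (forall x y, 0 <= a x y) ->
  \esum_(x in [set: A]) \esum_(y in [set: B]) a x y =
  \esum_(y in [set: B]) \esum_(x in [set: A]) a x y.
Proof.
move=> a0; rewrite -!esumT_pair //.
rewrite (reindex_esum [set: B * A] _ (fun p => (p.2, p.1))) // setTT_bijective.
by exists (fun p => (p.2, p.1)) => -[].
Qed.

Variable T : choiceType.

Definition ffun_cons K (t : T) (y : {ffun 'I_K -> T}) : {ffun 'I_K.+1 -> T} :=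
  [ffun i => if unlift ord0 i is Some j then y j else t].

Lemma ffun_cons0 K t (y : {ffun 'I_K -> T}) : ffun_cons t y ord0 = t.
Proof. by rewrite ffunE unlift_none. Qed.

Lemma ffun_consS K t (y : {ffun 'I_K -> T}) j : ffun_cons t y (lift ord0 j) = y j.
Proof. by rewrite ffunE liftK. Qed.

Lemma ffun_cons_bijective K :
  bijective (fun p : T * {ffun 'I_K -> T} => ffun_cons p.1 p.2).
Proof.
exists (fun x : {ffun 'I_K.+1 -> T} => (x ord0, [ffun j : 'I_K => x (lift ord0 j)])).
  by move=> [t y]; rewrite /= ffun_cons0; congr pair; apply/ffunP => j; rewrite ffunE ffun_consS.
move=> x; apply/ffunP => i; rewrite ffunE.
by case: unliftP => [j ->|->] //=; rewrite ffunE.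
Qed.

Lemma esum_ffun_cons K (a : {ffun 'I_K.+1 -> T} -> \bar R) : (forall x, 0 <= a x) ->
  \esum_(x in [set: {ffun 'I_K.+1 -> T}]) a x =
  \esum_(t in [set: T]) \esum_(y in [set: {ffun 'I_K -> T}]) a (ffun_cons t y).
Proof.
move=> a0; rewrite -(esumT_pair (a := fun t y => a (ffun_cons t y))) //.
by apply: reindex_esum; rewrite setTT_bijective; exact: ffun_cons_bijective.
Qed.

Lemma esum_ffun_prod K (f : 'I_K -> T -> R) (s : 'I_K -> R) :
  (forall j t, (0 <= f j t)%R) ->
  (forall j, \esum_(t in [set: T]) (f j t)%:E = (s j)%:E) ->
  \esum_(x in [set: {ffun 'I_K -> T}]) (\prod_j f j (x j))%:E = (\prod_j s j)%:E.
Proof.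
elim: K f s => [|K IH] f s f0 fs.
  have -> : [set: {ffun 'I_0 -> T}] = [set ffun0 (card_ord 0)].
    by apply/seteqP; split => x //= _; apply/ffunP => -[].
  by rewrite esum_set1 !big_ord0 // lee_fin.
have s0 j : (0 <= s j)%R.
  by rewrite -lee_fin -fs; apply: esum_ge0 => t _; rewrite lee_fin.
rewrite esum_ffun_cons => [|x]; last by rewrite lee_fin prodr_ge0.
transitivity (\esum_(t in [set: T]) ((\prod_(j < K) s (lift ord0 j))%:E * (f ord0 t)%:E)).
  apply: eq_esum => t _; rewrite -(IH (fun j => f (lift ord0 j))) // muleC -esumZl //.
    apply: eq_esum => y _; rewrite big_ord_recl ffun_cons0 EFinM.
    by congr (_ * (_)%:E); apply: eq_bigr => j _; rewrite ffun_consS.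
  by move=> y; rewrite lee_fin prodr_ge0.
rewrite esumZl => [||t]; last by rewrite lee_fin.
- by rewrite (fs ord0) -EFinM big_ord_recl mulrC.
- by rewrite prodr_ge0.
Qed.

Definition ffun_join m n (u : {ffun 'I_m -> T}) (v : {ffun 'I_n -> T}) :
  {ffun 'I_(m + n) -> T} :=
  [ffun j => match fintype.split j with inl i => u i | inr i => v i end].

Lemma ffun_join_lshift m n u v (i : 'I_m) : @ffun_join m n u v (lshift n i) = u i.
Proof. by rewrite ffunE (unsplitK (inl _ i)). Qed.

Lemma ffun_join_rshift m n u v (i : 'I_n) : @ffun_join m n u v (rshift m i) = v i.
Proof. by rewrite ffunE (unsplitK (inr _ i)). Qed.

Lemma ffun_join_bijective m n :
  bijective (fun p : {ffun 'I_m -> T} * {ffun 'I_n -> T} => ffun_join p.1 p.2).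
Proof.
exists (fun x : {ffun 'I_(m + n) -> T} =>
  ([ffun i : 'I_m => x (lshift n i)], [ffun i : 'I_n => x (rshift m i)])).
  move=> [u v] /=; congr pair; apply/ffunP => i; rewrite ffunE.
    exact: ffun_join_lshift.
  exact: ffun_join_rshift.
by move=> x; apply/ffunP => j; rewrite ffunE; case: split_ordP => i ->; rewrite ffunE.
Qed.

Lemma esum_ffun_join m n (a : {ffun 'I_(m + n) -> T} -> \bar R) :
  (forall x, 0 <= a x) ->
  \esum_(x in [set: {ffun 'I_(m + n) -> T}]) a x =
  \esum_(u in [set: {ffun 'I_m -> T}]) \esum_(v in [set: {ffun 'I_n -> T}]) a (ffun_join u v).
Proof.
move=> a0; rewrite -(esumT_pair (a := fun u v => a (ffun_join u v))) //.
by apply: reindex_esum; rewrite setTT_bijective; exact: ffun_join_bijective.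
Qed.

End esum_ffun.

Section nat_esum.
Variable R : realType.

Lemma esum_nat_ord (a : nat -> \bar R) (N : nat) :
  (forall n, (0 <= a n)%E) -> (forall n, (N <= n)%N -> a n = 0%E) ->
  \esum_(n in [set: nat]) a n = \sum_(n < N) a n.
Proof.
move=> a0 aN; rewrite (esumID `I_N) //.
rewrite [X in (_ + X)%E]esum1 ?adde0; last by move=> n [_ /negP]; rewrite -leqNgt => /aN.
by rewrite setTI esum_fset ?fsbig_ord.
Qed.

Lemma esum_ltn_mul (c : R) N : 0 <= c ->
  (\esum_(k in [set: nat]) (c * (k < N)%:R)%:E = (c * N%:R)%:E)%E.
Proof.
move=> c0; rewrite (esum_nat_ord (N := N)) => [|k|k]; last 2 first.
- by rewrite lee_fin mulr_ge0.
- by rewrite ltnNge => ->; rewrite mulr0.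
rewrite sumEFin (eq_bigr (fun=> c)) ?sumr_const ?card_ord ?mulr_natr // => k _.
by rewrite ltn_ord mulr1.
Qed.

Lemma geom_pmf_ge0 (p : R) n : 0 <= p <= 1 -> 0 <= geom_pmf p n.
Proof. by case/andP=> p0 p1; case: n => //= n; rewrite mulr_ge0 ?exprn_ge0 ?subr_ge0. Qed.

Lemma sum_geom_pmf (p : R) k : \sum_(n < k.+1) geom_pmf p n = geom_cdf p k.
Proof.
elim: k => [|k IH]; first by rewrite big_ord1 geom_cdf0.
by rewrite big_ord_recr /= IH /geom_cdf exprS; ring.
Qed.

Lemma esum_geom_pmf_le (p : R) k : 0 <= p <= 1 ->
  \esum_(n in [set: nat]) (geom_pmf p n * (n <= k)%:R)%:E = (geom_cdf p k)%:E.
Proof.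
move=> p01; rewrite (esum_nat_ord (N := k.+1)); last 2 first.
- by move=> n; rewrite lee_fin mulr_ge0 ?geom_pmf_ge0.
- by move=> n; rewrite ltnNge => /negbTE ->; rewrite mulr0.
rewrite -sum_geom_pmf sumEFin; congr (_%:E); apply: eq_bigr => n _.
by rewrite -ltnS ltn_ord mulr1.
Qed.

Lemma esum_geom_pmf (p : R) : 0 < p <= 1 ->
  \esum_(n in [set: nat]) (geom_pmf p n)%:E = 1%E.
Proof.
case/andP => p0 p1; rewrite -nneseries_esumT; last first.
  by move=> n; rewrite lee_fin geom_pmf_ge0 // ltW ?p1.
have series_cvg : series (geom_pmf p) @ \oo --> (1 : R).
  rewrite -cvg_shiftS.
  have -> : [sequence series (geom_pmf p) n.+1]_n = series (geometric p (1 - p)).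
    by apply/funext => n /=; rewrite /series /= big_nat_recl //= add0r.
  have q_lt1 : `|1 - p| < 1 by rewrite ger0_norm ?subr_ge0 // ltrBlDr ltrDl.
  by have := @cvg_geometric_series _ p _ q_lt1; rewrite subKr divff ?gt_eqF.
rewrite (_ : (fun n => _) = EFin \o series (geom_pmf p)); last first.
  by apply/funext => n /=; rewrite sumEFin.
by rewrite EFin_lim ?(cvg_lim _ series_cvg) //; apply/cvg_ex; exists 1.
Qed.

End nat_esum.

Section model.
Variable R : realType.

Definition loss_coef : R := @alpha_att R / 10 * ln 10.

Lemma loss_coef_gt0 : 0 < loss_coef.
Proof. by rewrite /loss_coef /alpha_att mulr_gt0 ?ln_gt0 ?ltr1n // divr_gt0. Qed.

Lemma succ_probE (l : R) : succ_prob l = expR (- loss_coef * l).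
Proof.
rewrite /succ_prob /powR ifF; last by apply/negbTE; rewrite gt_eqF //; lra.
by congr expR; rewrite /loss_coef; ring.
Qed.

Lemma succ_prob_itv (l : R) : 0 <= l -> 0 < succ_prob l <= 1.
Proof.
move=> l0; rewrite succ_probE expR_gt0 expR_le1 mulNr oppr_le0.
by rewrite mulr_ge0 // ltW // loss_coef_gt0.
Qed.

Lemma t_att_ge0 K (len : 'I_K -> R) : 0 <= t_att len.
Proof. by rewrite /t_att divr_ge0 ?bigmax_ge_id // /light_speed; lra. Qed.

Variables (K : nat) (len : 'I_K -> R).
Hypothesis len_ge0 : forall j, 0 <= len j.

Let p01 j : 0 <= succ_prob (len j) <= 1.
Proof. by have /andP[/ltW -> ->] := succ_prob_itv (len_ge0 j). Qed.

Lemma joint_pmf_ge0 x : 0 <= joint_pmf len x.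
Proof. by apply: prodr_ge0 => j _; exact: geom_pmf_ge0 (p01 j). Qed.

Local Open Scope ereal_scope.

Lemma esum_joint_pmf : \esum_(x in [set: {ffun 'I_K -> nat}]) (joint_pmf len x)%:E = 1.
Proof.
rewrite (esum_ffun_prod (f := fun j => geom_pmf (succ_prob (len j))) (s := fun=> 1%R)).
- by rewrite big1.
- by move=> j n; exact: geom_pmf_ge0.
- by move=> j; apply: esum_geom_pmf; exact: succ_prob_itv.
Qed.

Lemma expectZl (c : R) f : (0 <= c)%R -> (forall x, 0 <= f x)%R ->
  expect len (fun x => c * f x)%R = c%:E * expect len f.
Proof.
move=> c0 f0; rewrite /expect -esumZl => [|//|x]; last by rewrite lee_fin mulr_ge0 ?joint_pmf_ge0.
by apply: eq_esum => x _; rewrite -EFinM mulrCA.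
Qed.

Lemma expect_cst (c : R) : (0 <= c)%R -> expect len (fun=> c) = c%:E.
Proof.
move=> c0; rewrite -[c]mulr1 (expectZl (f := fun=> 1%R)) // mulr1.
rewrite /expect (eq_esum (b := fun x => (joint_pmf len x)%:E)) ?esum_joint_pmf ?mule1 //.
by move=> x _; rewrite mulr1.
Qed.

Lemma expectD f g : (forall x, 0 <= f x)%R -> (forall x, 0 <= g x)%R ->
  expect len (fun x => f x + g x)%R = expect len f + expect len g.
Proof.
move=> f0 g0; rewrite /expect -esumD => [|x _|x _]; last 2 first.
- by rewrite lee_fin mulr_ge0 ?joint_pmf_ge0.
- by rewrite lee_fin mulr_ge0 ?joint_pmf_ge0.
by apply: eq_esum => x _; rewrite -EFinD mulrDr.
Qed.

Lemma expect_ge0 f : (forall x, 0 <= f x)%R -> 0 <= expect len f.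
Proof. by move=> f0; apply: esum_ge0 => x _; rewrite lee_fin mulr_ge0 ?joint_pmf_ge0. Qed.

Lemma le_expect f g : (forall x, 0 <= f x <= g x)%R -> expect len f <= expect len g.
Proof.
move=> fg; apply: le_esum => x _; have /andP[f0 fgx] := fg x.
by rewrite lee_fin ler_wpM2l ?joint_pmf_ge0.
Qed.

Lemma expect_itv f : (forall x, 0 <= f x <= 1)%R -> 0 <= expect len f <= 1.
Proof.
move=> f01; rewrite -[0](expect_cst (lexx 0%R)) -(expect_cst ler01).
by apply/andP; split; apply: le_expect => x; have /andP[f0 f1] := f01 x; rewrite ?lexx ?f0.
Qed.

Lemma expect_fin_num f : (forall x, 0 <= f x <= 1)%R -> expect len f \is a fin_num.
Proof. by move=> /expect_itv /andP[e0 e1]; rewrite ge0_fin_numE // (le_lt_trans e1) ?ltry. Qed.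

Lemma expect_max_le k :
  expect len (fun x => ((\max_j x j)%N <= k)%:R)%R =
  (\prod_j geom_cdf (succ_prob (len j)) k)%:E.
Proof.
rewrite /expect (eq_esum (b := fun x : {ffun 'I_K -> nat} =>
  (\prod_j (geom_pmf (succ_prob (len j)) (x j) * (x j <= k)%:R))%:E)%R).
  apply: (esum_ffun_prod (f := fun j n => geom_pmf (succ_prob (len j)) n * (n <= k)%:R)%R).
    by move=> j n; rewrite mulr_ge0 ?geom_pmf_ge0.
  by move=> j; exact: esum_geom_pmf_le.
move=> x _; rewrite big_split /=; congr (_ * _)%:E%R.
have [max_le|max_gt] := leqP (\max_j x j) k.
  by rewrite big1 // => j _; rewrite (leq_trans (leq_bigmax j) max_le).
have [j /negbTE xj_gt] : exists j, ~~ (x j <= k)%N.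
  apply/existsP; rewrite -negb_forall; apply: contraTN max_gt => /forallP x_le.
  by rewrite -leqNgt; apply/bigmax_leqP => j _; exact: x_le.
by rewrite (bigD1 j) //= xj_gt mul0r.
Qed.

Lemma expect_max_gt k :
  expect len (fun x => (k < \max_j x j)%:R)%R = (1 - \prod_j geom_cdf (succ_prob (len j)) k)%:E.
Proof.
have : expect len (fun x => (k < \max_j x j)%:R + ((\max_j x j)%N <= k)%:R)%R = 1.
  rewrite -(expect_cst ler01); congr expect; apply/funext => x.
  by case: leqP; rewrite ?addr0 ?add0r.
by rewrite expectD // expect_max_le EFinB => <-; rewrite addeK.
Qed.

Lemma expect_max :
  expect len (fun x => (\max_j x j)%:R)%R =
  \esum_(k in [set: nat]) (1 - \prod_j geom_cdf (succ_prob (len j)) k)%:E.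
Proof.
transitivity (\esum_(x in [set: {ffun 'I_K -> nat}]) \esum_(k in [set: nat])
    (joint_pmf len x * (k < \max_j x j)%:R)%:E)%R.
  by apply: eq_esum => x _; rewrite esum_ltn_mul ?joint_pmf_ge0.
rewrite esumT_swap => [|x k]; last by rewrite lee_fin mulr_ge0 ?joint_pmf_ge0.
by apply: eq_esum => k _; rewrite -expect_max_gt.
Qed.

Lemma expect_max_ge1 : (0 < K)%N -> 1 <= expect len (fun x => (\max_j x j)%:R)%R.
Proof.
move=> K_gt0; rewrite expect_max; apply: esum_ge; exists [set 0%N] => //.
rewrite fsbig_set1 lee_fin (eq_bigr (fun=> 0%R)) => [|j _]; last exact: geom_cdf0.
by rewrite prodr_const card_ord expr0n eqn0Ngt K_gt0 subr0.
Qed.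

Lemma expect_T_done :
  expect len (T_done len) = (t_att len)%:E * expect len (fun x => (\max_j x j)%:R)%R.
Proof. exact: expectZl (t_att_ge0 len) _. Qed.

Lemma ent_rate_ge0 : (0 <= ent_rate len)%R.
Proof.
by rewrite invr_ge0 fine_ge0 // expect_ge0 // => x; rewrite mulr_ge0 ?t_att_ge0.
Qed.

End model.

Section decay.
Variables (R : realType) (T : R) (imp : nat -> bool).

Definition decay_at K (t : R) (x : {ffun 'I_K -> nat}) : R :=
  \prod_(i < K | (0 < i)%N && imp i)
     expR (- `|t * (x i)%:R - t * (x (prev_edge i))%:R| / T).

Lemma decayE K (len : 'I_K -> R) : decay T imp len = decay_at (t_att len).
Proof. by []. Qed.

Hypothesis T_gt0 : 0 < T.

Lemma decay_at_itv K t (x : {ffun 'I_K -> nat}) : 0 <= decay_at t x <= 1.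
Proof.
apply/andP; split; first by apply: prodr_ge0 => i _; exact: expR_ge0.
apply: prodr_ile1 => i _; rewrite expR_ge0 expR_le1 mulNr oppr_le0.
by rewrite divr_ge0 // ltW.
Qed.

Lemma decay_at_anti K t1 t2 (x : {ffun 'I_K -> nat}) : 0 <= t1 -> t1 <= t2 ->
  decay_at t2 x <= decay_at t1 x.
Proof.
move=> t10 t12; apply: ler_prod => i _; rewrite expR_ge0 ler_expR !mulNr lerN2.
rewrite ler_pM2r ?invr_gt0 // -!mulrBr !normrM ler_wpM2r //.
by rewrite !ger0_norm // (le_trans t10).
Qed.

Lemma decay_at_join m n t (u : {ffun 'I_m -> nat}) (v : {ffun 'I_n -> nat}) :
  (forall i, imp i -> (i < m)%N) -> decay_at t (ffun_join u v) = decay_at t u.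
Proof.
move=> imp_lt; rewrite /decay_at big_split_ord /= [X in _ * X]big_pred0 ?mulr1 => [|i].
  apply: eq_bigr => i _; rewrite !ffun_join_lshift.
  have -> : prev_edge (lshift n i) = lshift n (prev_edge i) by apply: val_inj.
  by rewrite ffun_join_lshift.
apply/negbTE; rewrite negb_and orbC; apply/orP; left.
by apply: contraTN (leq_addr i m) => /imp_lt; rewrite ltnNge.
Qed.

End decay.

Section chain.
Variables (R : realType) (m n : nat) (d : 'I_m -> R) (l : 'I_n -> R).
Hypotheses (d_ge0 : forall j, 0 <= d j) (l_ge0 : forall i, 0 <= l i).

Lemma chain_len_ge0 j : 0 <= chain_len d l j.
Proof. by rewrite /chain_len; case: (fintype.split j). Qed.

Lemma chain_len_lshift i : chain_len d l (lshift n i) = d i.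
Proof. by rewrite /chain_len (unsplitK (inl _ i)). Qed.

Lemma chain_len_rshift i : chain_len d l (rshift m i) = l i.
Proof. by rewrite /chain_len (unsplitK (inr _ i)). Qed.

Lemma joint_pmf_chain u v :
  joint_pmf (chain_len d l) (ffun_join u v) = joint_pmf d u * joint_pmf l v.
Proof.
rewrite /joint_pmf big_split_ord; congr (_ * _); apply: eq_bigr => i _.
  by rewrite chain_len_lshift ffun_join_lshift.
by rewrite chain_len_rshift ffun_join_rshift.
Qed.

Local Open Scope ereal_scope.

Lemma expect_chain_marginal f g : (forall x, 0 <= f x)%R ->
  (forall u v, f (ffun_join u v) = g u) -> expect (chain_len d l) f = expect d g.
Proof.
move=> f0 fg; have g0 u : (0 <= g u)%R by rewrite -(fg u [ffun=> 0%N]).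
rewrite /expect esum_ffun_join => [|x]; last first.
  by rewrite lee_fin mulr_ge0 // (joint_pmf_ge0 chain_len_ge0).
apply: eq_esum => u _; transitivity (\esum_(v in [set: {ffun 'I_n -> nat}])
    ((joint_pmf d u * g u)%:E * (joint_pmf l v)%:E)).
  by apply: eq_esum => v _; rewrite joint_pmf_chain fg -EFinM mulrAC.
rewrite esumZl ?esum_joint_pmf ?mule1 // => [|v]; last by rewrite lee_fin (joint_pmf_ge0 l_ge0).
by rewrite mulr_ge0 // (joint_pmf_ge0 d_ge0).
Qed.

Lemma mean_w_chain (F T : R) (imp : nat -> bool) :
  (0 < T)%R -> (forall i, imp i -> (i < m)%N) ->
  mean_w F T imp (chain_len d l) =
  (werner_param F ^+ (m + n) * fine (expect d (decay_at T imp (t_att (chain_len d l)))))%R.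
Proof.
move=> T_gt0 imp_lt; rewrite /mean_w decayE.
rewrite (expect_chain_marginal (g := decay_at T imp (t_att (chain_len d l)))) //.
- by move=> x; have /andP[] := decay_at_itv imp T_gt0 (t_att (chain_len d l)) x.
- by move=> u v; exact: decay_at_join.
Qed.

End chain.

Lemma fine_invr_le (R : realType) (a b : \bar R) : (0 < a)%E -> (a <= b)%E ->
  (fine b)^-1 <= (fine a)^-1.
Proof.
case: a => [r||] //; case: b => [s||] //=; rewrite ?invr0 ?lee_fin ?lte_fin.
- by move=> r0 rs; rewrite lef_pV2 ?posrE // (lt_le_trans r0).
- by move=> r0 _; rewrite invr_ge0 ltW.
Qed.

Definition uniform_len (R : realType) (k : nat) (L : R) : 'I_k -> R := fun=> L / k%:R.
Arguments uniform_len {R} k L _.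

Section uniform_chain.
Variables (R : realType) (m n : nat) (d : 'I_m -> R) (l : 'I_n.+1 -> R) (L : R).
Hypotheses (d_ge0 : forall j, 0 <= d j) (l_ge0 : forall i, 0 <= l i).
Hypothesis sum_l : \sum_i l i = L.

Let uniform_ge0 i : 0 <= uniform_len n.+1 L i.
Proof. by rewrite divr_ge0 // -sum_l sumr_ge0. Qed.

Lemma t_att_chain_uniform_le :
  t_att (chain_len d (uniform_len n.+1 L)) <= t_att (chain_len d l).
Proof.
rewrite ler_pM2r ?invr_gt0 /light_speed; last lra.
set B := \big[Num.max/0]_(j < m + n.+1) chain_len d l j.
have le_B j : chain_len d l j <= B by exact: le_bigmax.
apply: bigmax_le; first exact: bigmax_ge_id.
move=> j _; case: (split_ordP j) => i ->.
  by have := le_B (lshift _ i); rewrite !chain_len_lshift.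
rewrite chain_len_rshift /uniform_len ler_pdivrMr ?ltr0Sn // -sum_l.
have le_lB k : l k <= B by have := le_B (rshift m k); rewrite chain_len_rshift.
by apply: le_trans (ler_sum _ (fun k _ => le_lB k)) _; rewrite sumr_const card_ord mulr_natr.
Qed.

Lemma t_att_chain_uniform_gt0 : 0 < L -> 0 < t_att (chain_len d (uniform_len n.+1 L)).
Proof.
move=> L_gt0; apply: divr_gt0; last by rewrite /light_speed; lra.
apply: lt_le_trans (le_bigmax 0 _ (rshift m ord0)).
by rewrite chain_len_rshift divr_gt0.
Qed.

Lemma prod_geom_cdf_chain_le k :
  \prod_j geom_cdf (succ_prob (chain_len d l j)) k <=
  \prod_j geom_cdf (succ_prob (chain_len d (uniform_len n.+1 L) j)) k.
Proof.
have cdf_ge0 x : 0 <= x -> 0 <= geom_cdf (succ_prob x) k.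
  by move=> /succ_prob_itv /andP[p0 p1]; rewrite geom_cdf_ge0 // ltW.
have split_prod (l' : 'I_n.+1 -> R) : \prod_j geom_cdf (succ_prob (chain_len d l' j)) k =
    \prod_i geom_cdf (succ_prob (d i)) k * \prod_i geom_cdf (succ_prob (l' i)) k.
  by rewrite big_split_ord; congr (_ * _); apply: eq_bigr => i _;
    rewrite ?chain_len_lshift ?chain_len_rshift.
rewrite !split_prod; apply: ler_wpM2l; first by apply: prodr_ge0 => i _; exact: cdf_ge0.
rewrite /uniform_len prodr_const card_ord succ_probE.
under eq_bigr do rewrite succ_probE.
exact (prod_geom_cdf_expR_le k (loss_coef_gt0 R) l_ge0 sum_l).
Qed.

Let chain_ge0 := chain_len_ge0 d_ge0 l_ge0.
Let chain_uniform_ge0 := chain_len_ge0 d_ge0 uniform_ge0.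

Lemma expect_T_done_chain_le : 0 < L ->
  (0 < expect (chain_len d (uniform_len n.+1 L)) (T_done (chain_len d (uniform_len n.+1 L))) <=
   expect (chain_len d l) (T_done (chain_len d l)))%E.
Proof.
move=> L_gt0; rewrite (expect_T_done chain_ge0) (expect_T_done chain_uniform_ge0).
have max_ge1 := expect_max_ge1 chain_uniform_ge0 (ltn_addl m (ltn0Sn n)).
have t_gt0 := t_att_chain_uniform_gt0 L_gt0.
apply/andP; split.
  by rewrite mule_gt0 ?lte_fin // (lt_le_trans _ max_ge1) ?lte01.
apply: lee_pmul.
- by rewrite lee_fin ltW.
- exact: le_trans lee01 max_ge1.
- by rewrite lee_fin t_att_chain_uniform_le.
rewrite (expect_max chain_ge0) (expect_max chain_uniform_ge0); apply: le_esum => k _.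
by rewrite lee_fin lerD2l lerN2 prod_geom_cdf_chain_le.
Qed.

Lemma ent_rate_chain_le : 0 < L ->
  ent_rate (chain_len d l) <= ent_rate (chain_len d (uniform_len n.+1 L)).
Proof. by move=> /expect_T_done_chain_le /andP[E_gt0 E_le]; exact: fine_invr_le. Qed.

Lemma SKF_chain_le (F T : R) (imp : nat -> bool) :
  0 <= F <= 1 -> 0 < T -> (forall i, imp i -> (i < m)%N) ->
  SKF F T imp (chain_len d l) <= SKF F T imp (chain_len d (uniform_len n.+1 L)).
Proof.
move=> /andP[F0 F1] T_gt0 imp_lt.
pose mean_decay (t : R) := fine (expect d (decay_at T imp t)).
have decay01 (t : R) := @decay_at_itv _ _ imp T_gt0 m t.
have fin (t : R) := expect_fin_num d_ge0 (decay01 t).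
have decay_itv t : 0 <= mean_decay t <= 1.
  have /andP[e0 e1] := expect_itv d_ge0 (decay01 t).
  by rewrite fine_ge0 //= -lee_fin fineK ?fin.
have decay_anti : mean_decay (t_att (chain_len d l)) <=
    mean_decay (t_att (chain_len d (uniform_len n.+1 L))).
  rewrite fine_le ?fin // le_expect // => x.
  have /andP[-> _] /= := decay01 (t_att (chain_len d l)) x.
  by rewrite decay_at_anti ?t_att_ge0 ?t_att_chain_uniform_le.
have w_le1 : `|werner_param F ^+ (m + n.+1)| <= 1.
  by rewrite normrX exprn_ile1 // ler_norml /werner_param; apply/andP; split; lra.
have /andP[a0 _] := decay_itv (t_att (chain_len d l)).
have /andP[b0 b1] := decay_itv (t_att (chain_len d (uniform_len n.+1 L))).
apply: key_fraction_le; rewrite !mean_w_chain // !normrM -/(mean_decay _) -/(mean_decay _).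
- by rewrite (ger0_norm a0) (ger0_norm b0) ler_wpM2l.
- by rewrite (ger0_norm b0) mulr_ile1.
Qed.

End uniform_chain.

Unset Implicit Arguments.

Theorem mainTheorem6 (R : realType) (M N : nat) (F T L : R)
    (d : 'I_M.-1 -> R) (l : 'I_N.+1 -> R) :
  (0 < M)%N ->
  0 <= F <= 1 ->
  0 < T ->
  (forall j, 0 <= d j) ->
  (forall i, 0 <= l i) ->
  \sum_(i < N.+1) l i = L ->
  SKR F T (imperfect_first M) (chain_len d l)
    <= SKR F T (imperfect_first M) (chain_len d (fun _ : 'I_N.+1 => L / N.+1%:R)).
Proof.
move=> _ F01 T_gt0 d_ge0 l_ge0 sum_l.
have [L_gt0|L_le0] := ltP 0 L; last first.
  suff -> : l = uniform_len N.+1 L by [].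
  have L0 : L = 0 by apply/le_anti; rewrite L_le0 -sum_l sumr_ge0.
  apply/funext => i; rewrite /uniform_len L0 mul0r.
  by apply: (psumr_eq0P (P := xpredT)) => //; rewrite sum_l.
apply: ler_pM.
- exact: ent_rate_ge0 (chain_len_ge0 d_ge0 l_ge0).
- exact: key_fraction_ge0.
- exact: ent_rate_chain_le.
- exact: SKF_chain_le.
Qed.
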